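(* Let $m,n\ge 1$ be integers, let $r_b,r_w\ge 0$, and let $R_{th0}>0$ satisfy $R_{th0}>m r_b+n r_w$. Write $d_{ij}=i r_b+j r_w$ for $1\le i\le m$, $1\le j\le n$. Consider the equation in the unknown $R> m r_b + n r_w$: $$\ln(R_{th0})=\frac{1}{mn}\sum_{i=1}^{m}\sum_{j=1}^{n}\ln\big(R-d_{ij}\big). \qquad (\ast)$$ Define the sequence $(R^{(l)})_{l\ge 0}$ by $R^{(0)}=R_{th0}$ and, for $l\ge 1$, $$\ln\big(R^{(l)}\big)=\ln(R_{th0})-\frac{1}{mn}\sum_{i=1}^{m}\sum_{j=1}^{n}\ln\Big(1-\frac{d_{ij}}{R^{(l-1)}}\Big).$$ Then every $R^{(l)}$ is well defined (i.e. $R^{(l)}>m r_b+n r_w$), equation $(\ast)$ has a solution $R_{th\_array}$ in $(m r_b+n r_w,\infty)$, and the sequence $R^{(l)}$ converges to $R_{th\_array}$ as $l\to\infty$.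
   Context: This iteration is called the STMC threshold solver algorithm in the paper (iterate until a fixed number of iterations or until successive iterates differ by at most a tolerance $\epsilon$). Here $R_{th0}$ plays the role of the optimal read resistance threshold in the absence of line resistance, $r_b$ and $r_w$ are the per-junction bitline and wordline resistances, and $(\ast)$ is the equation defining the common read threshold $R_{th\_array}$ for an $m\times n$ crossbar array. *)

From Stdlib Require Import Reals.
From Coquelicot Require Import Coquelicot.
Open Scope R_scope.

Definition dij (rb rw : R) (i j : nat) : R := INR i * rb + INR j * rw.

Definition avg2 (m n : nat) (f : nat -> nat -> R) : R :=
  / (INR m * INR n) * sum_n_m (fun i => sum_n_m (fun j => f i j) 1 n) 1 m.

Definition stmc_step (m n : nat) (rb rw Rth0 Rprev : R) : R :=
  exp (ln Rth0 - avg2 m n (fun i j => ln (1 - dij rb rw i j / Rprev))).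

Fixpoint stmc_seq (m n : nat) (rb rw Rth0 : R) (l : nat) : R :=
  match l with
  | O => Rth0
  | S l' => stmc_step m n rb rw Rth0 (stmc_seq m n rb rw Rth0 l')
  end.

From Stdlib Require Import Reals Lra Lia.
From Coquelicot Require Import Coquelicot.
Open Scope R_scope.

(* Let f(r) = exp(ln Rth0 - (1/mn) Σ ln(1 - d_ij / r)) be one STMC step and dmax = m r_b + n r_w.
   On (dmax, +oo) every term ln(1 - d_ij/r) is <= 0 and nondecreasing in r, so f >= Rth0 and
   f is antitone; f is also continuous.  For such a map the iterates from Rth0 oscillate:
   the even ones increase, the odd ones decrease, and their limits A <= B satisfy f A = B,
   f B = A.  The heart of the proof is that f has no 2-cycle A < B in [Rth0, +oo): such a
   cycle forces dmax/A + dmax/B >= 1, and averaging a cross inequality between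
   ln(1 - t/A) and ln(1 - t/B) (a monotonicity property of ln(1-ty)/ln(1-tx) in t) yields
   (ln Rth0 - ln dmax)(ln(1-X) - ln(1-Y)) <= ell(Y) - ell(X) with X = dmax/B, Y = dmax/A,
   ell(t) = ln t ln(1-t); the left side is positive while ell(Y) <= ell(X).  Hence A = B is
   a fixed point, which is exactly a solution of the threshold equation. *)

Lemma nondecreasing_of_deriv_nonneg (f df : R -> R) (a b : R) :
  (forall x, a <= x <= b -> is_derive f x (df x)) ->
  (forall x, a <= x <= b -> 0 <= df x) ->
  a <= b -> f a <= f b.
Proof.
  intros Hd Hpos Hab.
  destruct (Req_dec a b) as [<-|Hne]; [lra|].
  destruct (MVT_cor2 f df a b) as [c [Heq Hc]].
  - lra.
  - intros x Hx. apply is_derive_Reals, Hd. exact Hx.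
  - assert (0 <= df c * (b - a)) by (apply Rmult_le_pos; [apply Hpos|]; lra). lra.
Qed.

Lemma ln_le_sub1 (u : R) : 0 < u -> ln u <= u - 1.
Proof. intros Hu. assert (H := exp_ineq1_le (ln u)). rewrite exp_ln in H; lra. Qed.

Lemma ln_neg (u : R) : 0 < u < 1 -> ln u < 0.
Proof. intros H. rewrite <- ln_1. apply ln_increasing; lra. Qed.

(* k(z) = (1-z) ln(1-z) / z is nondecreasing on (0,1): k' = (-z - ln(1-z)) / z^2 >= 0. *)
Lemma k_nondecreasing (z1 z2 : R) : 0 < z1 -> z1 <= z2 -> z2 < 1 ->
  (1 - z1) * ln (1 - z1) / z1 <= (1 - z2) * ln (1 - z2) / z2.
Proof.
  intros H1 H2 H3.
  apply (nondecreasing_of_deriv_nonneg (fun z => (1 - z) * ln (1 - z) / z)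
           (fun z => (- z - ln (1 - z)) / z ^ 2)); try lra.
  - intros z Hz. auto_derive; [lra|].
    replace (1 + - z) with (1 - z) by ring. field. lra.
  - intros z Hz. apply Rmult_le_pos.
    + assert (H := ln_le_sub1 (1 - z) ltac:(lra)). lra.
    + apply Rlt_le, Rinv_0_lt_compat, pow_lt. lra.
Qed.

(* ln(1-z)/z is nonincreasing on (0,1), since ln(1/(1-z)) <= z/(1-z). *)
Lemma ln1m_over_nonincreasing (z1 z2 : R) : 0 < z1 -> z1 <= z2 -> z2 < 1 ->
  ln (1 - z2) / z2 <= ln (1 - z1) / z1.
Proof.
  intros H1 H2 H3.
  enough (- (ln (1 - z1) / z1) <= - (ln (1 - z2) / z2)) by lra.
  apply (nondecreasing_of_deriv_nonneg (fun z => - (ln (1 - z) / z))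
           (fun z => (z / (1 - z) + ln (1 - z)) / z ^ 2)); try lra.
  - intros z Hz. auto_derive; [lra|].
    replace (1 + - z) with (1 - z) by ring. field. lra.
  - intros z Hz. apply Rmult_le_pos.
    + assert (H := ln_le_sub1 (/ (1 - z)) ltac:(apply Rinv_0_lt_compat; lra)).
      rewrite ln_Rinv in H by lra.
      assert (/ (1 - z) - 1 = z / (1 - z)) by (field; lra). lra.
    + apply Rlt_le, Rinv_0_lt_compat, pow_lt. lra.
Qed.

Lemma ell_nonincreasing (s t : R) : 1/2 <= s -> s <= t -> t < 1 ->
  ln t * ln (1 - t) <= ln s * ln (1 - s).
Proof.
  intros H1 H2 H3.
  enough (- (ln s * ln (1 - s)) <= - (ln t * ln (1 - t))) by lra.
  apply (nondecreasing_of_deriv_nonneg (fun u => - (ln u * ln (1 - u)))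
           (fun u => ln u / (1 - u) - ln (1 - u) / u)); try lra.
  - intros z Hz. auto_derive; [lra|].
    replace (1 + - z) with (1 - z) by ring. field. lra.
  - intros z Hz.
    assert (H := ln1m_over_nonincreasing (1 - z) z ltac:(lra) ltac:(lra) ltac:(lra)).
    replace (1 - (1 - z)) with z in H by ring. lra.
Qed.

(* Since ell is symmetric about 1/2, ell(Y) <= ell(X) whenever X < Y < 1 and X + Y >= 1. *)
Lemma ell_compare (X Y : R) : X < Y -> Y < 1 -> 1 <= X + Y ->
  ln Y * ln (1 - Y) <= ln X * ln (1 - X).
Proof.
  intros HXY HY Hsum.
  destruct (Rle_lt_dec (1/2) X) as [h|h].
  - apply ell_nonincreasing; lra.
  - assert (H := ell_nonincreasing (1 - X) Y ltac:(lra) ltac:(lra) ltac:(lra)).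
    replace (1 - (1 - X)) with X in H by ring. lra.
Qed.

(* For 0 < x < y, the ratio ln(1 - t y) / ln(1 - t x) is nondecreasing in t while t y < 1;
   its derivative has the sign of k(t y) - k(t x). *)
Lemma log_ratio_nondecreasing (x y d D : R) : 0 < x -> x < y -> 0 < d -> d <= D ->
  D * y < 1 -> ln (1 - d * y) / ln (1 - d * x) <= ln (1 - D * y) / ln (1 - D * x).
Proof.
  intros Hx Hxy Hd HdD HDy.
  assert (Hrange : forall t, d <= t <= D -> 0 < t * x < t * y /\ t * y < 1).
  { intros t Ht. assert (t * y <= D * y) by (apply Rmult_le_compat_r; lra).
    assert (t * x < t * y) by (apply Rmult_lt_compat_l; lra).
    assert (0 < t * x) by (apply Rmult_lt_0_compat; lra). lra. }
  apply (nondecreasing_of_deriv_nonneg (fun t => ln (1 - t * y) / ln (1 - t * x))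
    (fun t => ((- y / (1 - t * y)) * ln (1 - t * x) - ln (1 - t * y) * (- x / (1 - t * x)))
              / (ln (1 - t * x)) ^ 2)); try lra.
  - intros t Ht. destruct (Hrange t Ht) as [H1 H2].
    assert (Hne : ln (1 - t * x) <> 0) by (apply Rlt_not_eq, ln_neg; lra).
    auto_derive; [repeat split; try lra; exact Hne|].
    replace (1 + - (t * x)) with (1 - t * x) by ring.
    replace (1 + - (t * y)) with (1 - t * y) by ring.
    field. repeat split; try lra; exact Hne.
  - intros t Ht. destruct (Hrange t Ht) as [H1 H2].
    assert (HP : ln (1 - t * x) < 0) by (apply ln_neg; lra).
    assert (Hk := k_nondecreasing (t * x) (t * y) ltac:(lra) ltac:(lra) ltac:(lra)).
    apply Rmult_le_pos; [| apply Rlt_le, Rinv_0_lt_compat; simpl; nra].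
    set (P := ln (1 - t * x)) in *. set (Q := ln (1 - t * y)) in *.
    assert (E : - y / (1 - t * y) * P - Q * (- x / (1 - t * x)) =
      (x * y * t / ((1 - t * x) * (1 - t * y))) *
      ((1 - t * y) * Q / (t * y) - (1 - t * x) * P / (t * x))).
    { field. repeat split; lra. }
    rewrite E. apply Rmult_le_pos; [|lra].
    apply Rmult_le_pos.
    + assert (0 < t) by lra. assert (0 < x * y) by nra. nra.
    + apply Rlt_le, Rinv_0_lt_compat. apply Rmult_lt_0_compat; lra.
Qed.

Lemma log_cross_inequality (x y d D : R) : 0 < x -> x < y -> 0 <= d -> d <= D -> D * y < 1 ->
  ln (1 - d * y) * ln (1 - D * x) <= ln (1 - d * x) * ln (1 - D * y).
Proof.
  intros Hx Hxy Hd HdD HDy.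
  destruct (Req_dec d 0) as [->|Hd0].
  { rewrite !Rmult_0_l, Rminus_0_r, ln_1. lra. }
  assert (Hr := log_ratio_nondecreasing x y d D Hx Hxy ltac:(lra) HdD HDy).
  assert (Hdx : d * x < 1) by nra. assert (HDx : D * x < 1) by nra.
  assert (Hp : ln (1 - d * x) < 0) by (apply ln_neg; split; nra).
  assert (HP : ln (1 - D * x) < 0) by (apply ln_neg; split; nra).
  set (p := ln (1 - d * x)) in *. set (P := ln (1 - D * x)) in *.
  set (q := ln (1 - d * y)) in *. set (Q := ln (1 - D * y)) in *.
  assert (Hpp : 0 < p * P) by nra.
  apply (Rmult_le_compat_r (p * P)) in Hr; [|lra].
  replace (q / p * (p * P)) with (q * P) in Hr by (field; lra).
  replace (Q / P * (p * P)) with (p * Q) in Hr by (field; lra).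
  exact Hr.
Qed.
Lemma sum_n_m_rel (P : R -> R -> Prop) (a b : nat -> R) (p q : nat) :
  (forall x y x' y', P x y -> P x' y' -> P (x + x') (y + y')) ->
  (p <= q)%nat -> (forall k, (p <= k <= q)%nat -> P (a k) (b k)) ->
  P (sum_n_m a p q) (sum_n_m b p q).
Proof.
  intros Hadd Hpq. induction Hpq as [|q Hpq IH]; intros H.
  - rewrite !sum_n_n. apply H. lia.
  - rewrite !sum_n_Sm by lia.
    apply Hadd; [apply IH; intros k Hk|]; apply H; lia.
Qed.

Lemma is_lim_seq_sum_n_m (a : nat -> nat -> R) (b : nat -> R) (p q : nat) :
  (p <= q)%nat -> (forall k, (p <= k <= q)%nat -> is_lim_seq (fun l => a l k) (b k)) ->
  is_lim_seq (fun l => sum_n_m (a l) p q) (sum_n_m b p q).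
Proof.
  intros Hpq. induction Hpq as [|q Hpq IH]; intros H.
  - rewrite sum_n_n. apply (is_lim_seq_ext (fun l => a l p)).
    + intros l. rewrite sum_n_n. reflexivity.
    + apply H. lia.
  - rewrite sum_n_Sm by lia.
    apply (is_lim_seq_ext (fun l => sum_n_m (a l) p q + a l (S q))).
    + intros l. rewrite sum_n_Sm by lia. reflexivity.
    + apply is_lim_seq_plus'; [apply IH; intros k Hk|]; apply H; lia.
Qed.

Lemma sum_n_m_lin (a b : R) (u v : nat -> R) (p q : nat) :
  sum_n_m (fun k => a * u k + b * v k) p q = a * sum_n_m u p q + b * sum_n_m v p q.
Proof.
  exact (eq_trans (sum_n_m_plus (fun k => a * u k) (fun k => b * v k) p q)
           (f_equal2 Rplus (sum_n_m_mult_l a u p q) (sum_n_m_mult_l b v p q))).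
Qed.

Section Averages.
Variables m n : nat.
Hypothesis hm : (1 <= m)%nat.
Hypothesis hn : (1 <= n)%nat.

Definition in_grid (i j : nat) : Prop := (1 <= i <= m)%nat /\ (1 <= j <= n)%nat.

Lemma avg2_rel (P : R -> R -> Prop) (F G : nat -> nat -> R) :
  (forall x y x' y', P x y -> P x' y' -> P (x + x') (y + y')) ->
  (forall x y, P x y -> P (/ (INR m * INR n) * x) (/ (INR m * INR n) * y)) ->
  (forall i j, in_grid i j -> P (F i j) (G i j)) ->
  P (avg2 m n F) (avg2 m n G).
Proof.
  intros Hadd Hscal H. apply Hscal.
  apply sum_n_m_rel; [exact Hadd|exact hm|]. intros i Hi.
  apply sum_n_m_rel; [exact Hadd|exact hn|]. intros j Hj. apply H. split; lia.
Qed.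

Lemma avg2_weight_pos : 0 < / (INR m * INR n).
Proof. apply Rinv_0_lt_compat, Rmult_lt_0_compat; apply lt_0_INR; lia. Qed.

Lemma avg2_le (F G : nat -> nat -> R) :
  (forall i j, in_grid i j -> F i j <= G i j) -> avg2 m n F <= avg2 m n G.
Proof.
  apply avg2_rel; [intros; lra|].
  intros x y Hxy. apply Rmult_le_compat_l; [apply Rlt_le, avg2_weight_pos|exact Hxy].
Qed.

Lemma avg2_lt (F G : nat -> nat -> R) :
  (forall i j, in_grid i j -> F i j < G i j) -> avg2 m n F < avg2 m n G.
Proof.
  apply avg2_rel; [intros; lra|].
  intros x y Hxy. apply Rmult_lt_compat_l; [apply avg2_weight_pos|exact Hxy].
Qed.

Lemma avg2_ext (F G : nat -> nat -> R) :
  (forall i j, in_grid i j -> F i j = G i j) -> avg2 m n F = avg2 m n G.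
Proof. apply avg2_rel; intros; subst; reflexivity. Qed.

Lemma avg2_const (c : R) : avg2 m n (fun _ _ => c) = c.
Proof.
  unfold avg2. rewrite (sum_n_m_ext _ (fun _ => INR n * c)).
  - rewrite sum_n_m_const. replace (S m - 1)%nat with m by lia.
    assert (0 < INR m) by (apply lt_0_INR; lia). assert (0 < INR n) by (apply lt_0_INR; lia).
    field. split; lra.
  - intros i. rewrite sum_n_m_const. do 2 f_equal. lia.
Qed.

Lemma avg2_lin (a b : R) (F G : nat -> nat -> R) :
  avg2 m n (fun i j => a * F i j + b * G i j) = a * avg2 m n F + b * avg2 m n G.
Proof.
  unfold avg2.
  rewrite (sum_n_m_ext _ (fun i => a * sum_n_m (fun j => F i j) 1 n + b * sum_n_m (fun j => G i j) 1 n))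
    by (intros i; apply sum_n_m_lin).
  rewrite sum_n_m_lin. ring.
Qed.

Lemma avg2_scal (c : R) (F : nat -> nat -> R) :
  avg2 m n (fun i j => c * F i j) = c * avg2 m n F.
Proof.
  unfold avg2.
  rewrite (sum_n_m_ext _ (fun i => c * sum_n_m (fun j => F i j) 1 n))
    by (intros i; exact (sum_n_m_mult_l c _ 1 n)).
  transitivity (/ (INR m * INR n) * (c * sum_n_m (fun i => sum_n_m (fun j => F i j) 1 n) 1 m)).
  - f_equal. exact (sum_n_m_mult_l c _ 1 m).
  - ring.
Qed.

End Averages.

Lemma is_lim_seq_avg2 (m n : nat) (F : nat -> nat -> nat -> R) (G : nat -> nat -> R) :
  (1 <= m)%nat -> (1 <= n)%nat ->
  (forall i j, in_grid m n i j -> is_lim_seq (fun l => F l i j) (G i j)) ->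
  is_lim_seq (fun l => avg2 m n (F l)) (avg2 m n G).
Proof.
  intros hm hn H. unfold avg2.
  apply (is_lim_seq_scal_l _ _ (sum_n_m (fun i => sum_n_m (fun j => G i j) 1 n) 1 m)).
  apply (is_lim_seq_sum_n_m (fun l i => sum_n_m (fun j => F l i j) 1 n)); [exact hm|].
  intros i Hi. apply (is_lim_seq_sum_n_m (fun l j => F l i j)); [exact hn|].
  intros j Hj. apply H. split; lia.
Qed.
Lemma is_lim_seq_unique_R (u : nat -> R) (l1 l2 : R) :
  is_lim_seq u l1 -> is_lim_seq u l2 -> l1 = l2.
Proof.
  intros H1 H2. apply is_lim_seq_unique in H1. apply is_lim_seq_unique in H2.
  rewrite H1 in H2. injection H2. auto.
Qed.

Lemma is_lim_seq_even_odd (u : nat -> R) (L : R) :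
  is_lim_seq (fun k => u (2 * k)%nat) L -> is_lim_seq (fun k => u (S (2 * k))) L ->
  is_lim_seq u L.
Proof.
  intros Heven Hodd. apply is_lim_seq_spec. intros eps.
  apply is_lim_seq_spec in Heven. apply is_lim_seq_spec in Hodd.
  destruct (Heven eps) as [N1 H1]. destruct (Hodd eps) as [N2 H2].
  exists (2 * (N1 + N2))%nat. intros l Hl.
  destruct (Nat.Even_or_Odd l) as [[k Hk]|[k Hk]]; subst l.
  - apply H1. lia.
  - replace (2 * k + 1)%nat with (S (2 * k)) by lia. apply H2. lia.
Qed.

Section AntitoneIteration.
Variables (f : R -> R) (a : R) (u : nat -> R).
Hypothesis f_ge : forall x, a <= x -> a <= f x.
Hypothesis f_antitone : forall x y, a <= x -> x <= y -> f y <= f x.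
Hypothesis f_seq_continuous : forall (v : nat -> R) (L : R),
  a <= L -> is_lim_seq v L -> is_lim_seq (fun k => f (v k)) (f L).
Hypothesis u_0 : u 0%nat = a.
Hypothesis u_S : forall l, u (S l) = f (u l).

Lemma iterate_ge : forall l, a <= u l.
Proof.
  induction l as [|l IH]; [rewrite u_0; lra|].
  rewrite u_S. apply f_ge, IH.
Qed.

Lemma iterate_le_first : forall l, u l <= u 1%nat.
Proof.
  assert (Hu1 : u 1%nat = f a) by (rewrite u_S, u_0; reflexivity).
  intros [|l]; rewrite Hu1.
  - rewrite u_0. apply f_ge. lra.
  - rewrite u_S. apply f_antitone; [lra|apply iterate_ge].
Qed.

(* Applying the antitone f twice preserves order: u(2k) <= u(2k+2) and u(2k+3) <= u(2k+1). *)
Lemma iterate_parity_monotone : forall k,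
  u (2 * k)%nat <= u (S (S (2 * k))) /\ u (S (S (S (2 * k)))) <= u (S (2 * k)).
Proof.
  assert (Hstep : forall l, u l <= u (S (S l)) -> u (S (S (S l))) <= u (S l)).
  { intros l H. rewrite (u_S (S (S l))), (u_S l). apply f_antitone; [apply iterate_ge|exact H]. }
  induction k as [|k [IH _]].
  - assert (H0 : u 0%nat <= u 2%nat) by (rewrite u_0; apply iterate_ge).
    split; [exact H0|apply Hstep, H0].
  - replace (2 * S k)%nat with (S (S (2 * k))) by lia.
    assert (H : u (S (S (2 * k))) <= u (S (S (S (S (2 * k)))))).
    { rewrite (u_S (S (S (S (2 * k))))), (u_S (S (2 * k))).
      apply f_antitone; [apply iterate_ge|apply Hstep, IH]. }
    split; [exact H|apply Hstep, H].
Qed.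

Lemma iterate_limits_two_cycle : exists A B,
  a <= A /\ a <= B /\ f A = B /\ f B = A /\
  is_lim_seq (fun k => u (2 * k)%nat) A /\ is_lim_seq (fun k => u (S (2 * k))) B.
Proof.
  set (v := fun k => u (2 * k)%nat). set (w := fun k => u (S (2 * k))).
  assert (vS : forall k, v (S k) = u (S (S (2 * k)))) by (intros k; unfold v; f_equal; lia).
  assert (wS : forall k, w (S k) = u (S (S (S (2 * k))))) by (intros k; unfold w; f_equal; lia).
  destruct (ex_finite_lim_seq_incr v (u 1%nat)) as [A HA].
  { intros k. rewrite vS. apply iterate_parity_monotone. }
  { intros k. apply iterate_le_first. }
  destruct (ex_finite_lim_seq_decr w a) as [B HB].
  { intros k. rewrite wS. apply iterate_parity_monotone. }
  { intros k. apply iterate_ge. }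
  assert (HA0 : a <= A)
    by exact (is_lim_seq_le (fun _ => a) v a A (fun k => iterate_ge _) (is_lim_seq_const _) HA).
  assert (HB0 : a <= B)
    by exact (is_lim_seq_le (fun _ => a) w a B (fun k => iterate_ge _) (is_lim_seq_const _) HB).
  exists A, B. repeat split; try assumption.
  - apply (is_lim_seq_unique_R w); [|exact HB].
    apply (is_lim_seq_ext (fun k => f (v k))); [intros k; symmetry; apply u_S|].
    apply f_seq_continuous; assumption.
  - apply (is_lim_seq_unique_R (fun k => v (S k))); [|exact (proj1 (is_lim_seq_incr_1 v A) HA)].
    apply (is_lim_seq_ext (fun k => f (w k))); [intros k; rewrite vS; symmetry; apply u_S|].
    apply f_seq_continuous; assumption.
Qed.

Lemma iterate_converges_to_fixed_point :
  (forall x y, a <= x -> x < y -> f x = y -> f y = x -> False) ->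
  (forall l, a <= u l) /\ exists L, a <= L /\ f L = L /\ is_lim_seq u L.
Proof.
  intros no_cycle.
  destruct iterate_limits_two_cycle as (A & B & HA0 & HB0 & fA & fB & HA & HB).
  assert (AB : A = B).
  { destruct (Rtotal_order A B) as [h|[h|h]]; [exfalso|exact h|exfalso].
    - exact (no_cycle A B HA0 h fA fB).
    - exact (no_cycle B A HB0 h fB fA). }
  rewrite <- AB in fA, HB. split; [exact iterate_ge|]. exists A. repeat split; try assumption.
  apply is_lim_seq_even_odd; assumption.
Qed.

End AntitoneIteration.
Lemma is_lim_seq_derivable (g : R -> R) (v : nat -> R) (L : R) :
  ex_derive g L -> is_lim_seq v L -> is_lim_seq (fun k => g (v k)) (g L).
Proof.
  intros Hd Hv. apply is_lim_seq_continuous; [|exact Hv].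
  apply continuity_pt_filterlim. exact (ex_derive_continuous g L Hd).
Qed.

Section STMCMap.
Variables (m n : nat) (rb rw Rth0 : R).
Hypotheses (hm : (1 <= m)%nat) (hn : (1 <= n)%nat) (hrb : 0 <= rb) (hrw : 0 <= rw).

Definition dmax : R := INR m * rb + INR n * rw.

Definition log_defect (r : R) : R := avg2 m n (fun i j => ln (1 - dij rb rw i j / r)).

Local Notation step := (stmc_step m n rb rw Rth0).

Lemma ln_stmc_step (r : R) : ln (step r) = ln Rth0 - log_defect r.
Proof. unfold stmc_step. rewrite ln_exp. reflexivity. Qed.

Lemma dmax_nonneg : 0 <= dmax.
Proof. unfold dmax. assert (0 <= INR m) by apply pos_INR. assert (0 <= INR n) by apply pos_INR. nra. Qed.

Lemma dij_bounds (i j : nat) : in_grid m n i j -> 0 <= dij rb rw i j <= dmax.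
Proof.
  intros [Hi Hj]. unfold dij, dmax.
  assert (0 <= INR i) by apply pos_INR. assert (0 <= INR j) by apply pos_INR.
  assert (INR i <= INR m) by (apply le_INR; lia). assert (INR j <= INR n) by (apply le_INR; lia).
  split; nra.
Qed.

Lemma ratio_bounds (r d : R) : dmax < r -> 0 <= d <= dmax -> 0 <= d / r <= dmax / r /\ dmax / r < 1.
Proof.
  intros Hr Hd. assert (HDn := dmax_nonneg). assert (Rpos : 0 < r) by lra.
  assert (Hinv : 0 < / r) by (apply Rinv_0_lt_compat; lra).
  split; [split|]; unfold Rdiv.
  - apply Rmult_le_pos; lra.
  - apply Rmult_le_compat_r; lra.
  - apply (Rmult_lt_reg_r r); [lra|]. rewrite Rmult_assoc, Rinv_l by lra. lra.
Qed.

Lemma log_defect_nonpos (r : R) : dmax < r -> log_defect r <= 0.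
Proof.
  intros Hr. rewrite <- (avg2_const m n hm hn 0). apply (avg2_le m n hm hn).
  intros i j Hij. destruct (ratio_bounds r _ Hr (dij_bounds i j Hij)) as [[H1 H2] H3].
  rewrite <- ln_1. apply ln_le; lra.
Qed.

Lemma log_defect_nondecreasing (r r' : R) : dmax < r -> r <= r' -> log_defect r <= log_defect r'.
Proof.
  intros Hr Hrr. apply (avg2_le m n hm hn). intros i j Hij.
  assert (Hd := dij_bounds i j Hij).
  destruct (ratio_bounds r _ Hr Hd) as [[H1 H2] H3].
  apply ln_le; [lra|].
  assert (/ r' <= / r) by (apply Rinv_le_contravar; lra).
  assert (dij rb rw i j * / r' <= dij rb rw i j * / r) by (apply Rmult_le_compat_l; lra).
  unfold Rdiv in *. lra.
Qed.

Hypothesis hR0d : dmax < Rth0.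

Lemma stmc_step_ge (r : R) : dmax < r -> Rth0 <= step r.
Proof.
  intros Hr. assert (HDn := dmax_nonneg).
  assert (Hle := log_defect_nonpos r Hr).
  rewrite <- (exp_ln Rth0) at 1 by lra. unfold stmc_step.
  destruct (Rle_lt_or_eq_dec _ _ Hle) as [h|h].
  - apply Rlt_le, exp_increasing. unfold log_defect in h. lra.
  - unfold log_defect in h. rewrite h, Rminus_0_r. lra.
Qed.

Lemma stmc_step_antitone (r r' : R) : dmax < r -> r <= r' -> step r' <= step r.
Proof.
  intros Hr Hrr. assert (Hle := log_defect_nondecreasing r r' Hr Hrr).
  unfold stmc_step. destruct (Rle_lt_or_eq_dec _ _ Hle) as [h|h].
  - apply Rlt_le, exp_increasing. unfold log_defect in h. lra.
  - unfold log_defect in h. rewrite h. lra.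
Qed.

Lemma stmc_step_seq_continuous (v : nat -> R) (L : R) :
  dmax < L -> is_lim_seq v L -> is_lim_seq (fun k => step (v k)) (step L).
Proof.
  intros HL Hv. unfold stmc_step.
  apply (is_lim_seq_derivable exp (fun k => ln Rth0 - _)); [auto_derive; exact I|].
  apply is_lim_seq_minus'; [apply is_lim_seq_const|].
  apply (is_lim_seq_avg2 m n (fun l i j => ln (1 - dij rb rw i j / v l))); [exact hm|exact hn|].
  intros i j Hij. destruct (ratio_bounds L _ HL (dij_bounds i j Hij)) as [[H1 H2] H3].
  assert (HDn := dmax_nonneg).
  apply (is_lim_seq_derivable (fun r => ln (1 - dij rb rw i j / r))); [|exact Hv].
  auto_derive. replace (1 + - (dij rb rw i j * / L)) with (1 - dij rb rw i j / L) by (unfold Rdiv; ring).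
  repeat split; lra.
Qed.

Lemma stmc_fixed_point_equation (A : R) : dmax < A -> step A = A ->
  ln Rth0 = avg2 m n (fun i j => ln (A - dij rb rw i j)).
Proof.
  intros HA Hfix. assert (HDn := dmax_nonneg).
  assert (E := ln_stmc_step A). rewrite Hfix in E.
  rewrite (avg2_ext m n hm hn _ (fun i j => 1 * ln A + 1 * ln (1 - dij rb rw i j / A))).
  - rewrite (avg2_lin m n), (avg2_const m n hm hn). unfold log_defect in E. lra.
  - intros i j Hij. destruct (ratio_bounds A _ HA (dij_bounds i j Hij)) as [[H1 H2] H3].
    rewrite !Rmult_1_l, <- ln_mult by lra. f_equal. field. lra.
Qed.

(* In a 2-cycle A < B the log-defect grows exactly like ln, which forces
   dmax/A + dmax/B >= 1: otherwise every term ln(1 - d/B) - ln(1 - d/A) would be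
   strictly smaller than ln B - ln A, because (1 - d/A) B - (1 - d/B) A = (B - A)(1 - d/A - d/B). *)
Lemma two_cycle_ratio_sum (A B : R) : dmax < A -> A < B ->
  ln B - ln A = log_defect B - log_defect A -> 1 <= dmax / A + dmax / B.
Proof.
  intros HA HAB Heq. assert (HDn := dmax_nonneg).
  destruct (Rle_lt_dec 1 (dmax / A + dmax / B)) as [h|h]; [exact h|exfalso].
  assert (Hlt : avg2 m n (fun i j => 1 * ln (1 - dij rb rw i j / B) + -1 * ln (1 - dij rb rw i j / A))
                < avg2 m n (fun _ _ => ln B - ln A)).
  { apply (avg2_lt m n hm hn). intros i j Hij. assert (Hd := dij_bounds i j Hij).
    set (d := dij rb rw i j) in *.
    destruct (ratio_bounds A d HA Hd) as [[HA1 HA2] HA3].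
    destruct (ratio_bounds B d ltac:(lra) Hd) as [[HB1 HB2] HB3].
    assert (key : (1 - d / A) * B - (1 - d / B) * A = (B - A) * (1 - (d / A + d / B)))
      by (field; lra).
    assert (0 < (B - A) * (1 - (d / A + d / B))) by (apply Rmult_lt_0_compat; lra).
    assert (Hm : ln ((1 - d / B) * A) < ln ((1 - d / A) * B))
      by (apply ln_increasing; [apply Rmult_lt_0_compat|]; lra).
    rewrite !ln_mult in Hm by lra. lra. }
  rewrite (avg2_lin m n), (avg2_const m n hm hn) in Hlt.
  unfold log_defect in Heq. lra.
Qed.

(* Averaging the cross inequality for t |-> ln(1 - t/A) and t |-> ln(1 - t/B) over the
   d_ij in [0, dmax] compares the log-defects with the extreme terms d = dmax. *)
Lemma two_cycle_chord (A B : R) : dmax < A -> A < B ->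
  ln (1 - dmax / B) * log_defect A <= ln (1 - dmax / A) * log_defect B.
Proof.
  intros HA HAB. assert (HDn := dmax_nonneg).
  unfold log_defect. rewrite <- !(avg2_scal m n).
  apply (avg2_le m n hm hn). intros i j Hij. assert (Hd := dij_bounds i j Hij).
  assert (HBA : / B < / A) by (apply Rinv_lt_contravar; nra).
  assert (HB : 0 < / B) by (apply Rinv_0_lt_compat; lra).
  destruct (ratio_bounds A _ HA Hd) as [_ HDA].
  assert (H := log_cross_inequality (/ B) (/ A) _ dmax HB HBA (proj1 Hd) (proj2 Hd) HDA).
  unfold Rdiv. lra.
Qed.

(* The STMC map has no 2-cycle in [Rth0, +oo).  Writing X = dmax/B < Y = dmax/A and
   eta = ln Rth0 - ln dmax > 0, the chord inequality reads
   eta (ln(1-X) - ln(1-Y)) <= ell(Y) - ell(X) with ell(t) = ln t ln(1-t); the left side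
   is positive while ell(Y) <= ell(X) because X + Y >= 1. *)
Lemma stmc_no_two_cycle (A B : R) : Rth0 <= A -> A < B -> step A = B -> step B = A -> False.
Proof.
  intros HA0 HAB HfA HfB. assert (HDn := dmax_nonneg).
  assert (HA : dmax < A) by lra.
  assert (E1 := ln_stmc_step A). rewrite HfA in E1.
  assert (E2 := ln_stmc_step B). rewrite HfB in E2.
  assert (Hsum := two_cycle_ratio_sum A B HA HAB ltac:(lra)).
  assert (Hch := two_cycle_chord A B HA HAB).
  assert (Dpos : 0 < dmax).
  { destruct HDn as [h|h]; [exact h|]. rewrite <- h in Hsum. unfold Rdiv in Hsum. lra. }
  set (X := dmax / B) in *. set (Y := dmax / A) in *.
  assert (HX : 0 < X) by (apply Rdiv_lt_0_compat; lra).
  assert (HXY : X < Y) by (apply Rmult_lt_compat_l; [lra|apply Rinv_lt_contravar; nra]).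
  assert (HY1 : Y < 1) by (apply (ratio_bounds A dmax HA); lra).
  assert (LX : ln X = ln dmax - ln B) by (apply ln_div; lra).
  assert (LY : ln Y = ln dmax - ln A) by (apply ln_div; lra).
  assert (Heta : ln dmax < ln Rth0) by (apply ln_increasing; lra).
  assert (Hell := ell_compare X Y HXY HY1 ltac:(lra)).
  assert (Hln : ln (1 - Y) < ln (1 - X)) by (apply ln_increasing; lra).
  assert (0 < (ln Rth0 - ln dmax) * (ln (1 - X) - ln (1 - Y))) by (apply Rmult_lt_0_compat; lra).
  replace (log_defect A) with ((ln Rth0 - ln dmax) + ln X) in Hch by lra.
  replace (log_defect B) with ((ln Rth0 - ln dmax) + ln Y) in Hch by lra.
  lra.
Qed.

End STMCMap.

Theorem lemma1 (m n : nat) (rb rw Rth0 : R)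
  (hm : (1 <= m)%nat) (hn : (1 <= n)%nat)
  (hrb : 0 <= rb) (hrw : 0 <= rw)
  (hR0 : 0 < Rth0) (hR0d : INR m * rb + INR n * rw < Rth0) :
  (forall l : nat, INR m * rb + INR n * rw < stmc_seq m n rb rw Rth0 l) /\
  exists Rarr : R,
    INR m * rb + INR n * rw < Rarr /\
    ln Rth0 = avg2 m n (fun i j => ln (Rarr - dij rb rw i j)) /\
    is_lim_seq (stmc_seq m n rb rw Rth0) Rarr.
Proof.
  change (INR m * rb + INR n * rw) with (dmax m n rb rw) in *.
  destruct (iterate_converges_to_fixed_point (stmc_step m n rb rw Rth0) Rth0
              (stmc_seq m n rb rw Rth0)) as [Hge (L & HL0 & HfL & Hlim)].
  - intros x Hx. apply (stmc_step_ge m n rb rw Rth0 hm hn hrb hrw hR0d). lra.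
  - intros x y Hx Hxy. apply (stmc_step_antitone m n rb rw Rth0 hm hn hrb hrw); lra.
  - intros v L HL. apply (stmc_step_seq_continuous m n rb rw Rth0 hm hn hrb hrw). lra.
  - reflexivity.
  - intros l. reflexivity.
  - exact (stmc_no_two_cycle m n rb rw Rth0 hm hn hrb hrw hR0d).
  - split; [intros l; specialize (Hge l); lra|].
    exists L. split; [lra|]. split; [|exact Hlim].
    apply (stmc_fixed_point_equation m n rb rw Rth0 hm hn hrb hrw); [lra|exact HfL].
Qed.
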